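(* Consider the mixed-integer bilevel problem $$\min_{x,y}\ c_1^\top x+d_1^\top y\quad\text{s.t.}\quad A_1x+B_1y\le b_1,\qquad y\in\arg\min_{z}\{c_2^\top x+d_2^\top z:\ A_2x+B_2z\le b_2\},$$ with $x\in\mathbb{R}^{n_x}$, lower-level variables $z=(z_C,z_I)$ with $z_C\in\mathbb{R}^{n_{yC}}$ continuous and $z_I\in\{0,1\}^{n_{yI}}$ binary, $A_2\in\mathbb{R}^{m_2\times n_x}$, and $B_2=[B_{2C},B_{2I}]$ split by columns according to $(z_C,z_I)$. For a binary vector $\hat y_I\in\{0,1\}^{n_{yI}}$ and an index set $\mathcal{A}\subseteq\{1,\dots,m_2\}$ with $|\mathcal{A}|=n_{yC}$ such that the row-submatrix $B_{2C,\mathcal{A}}$ is invertible, define the affine map $$y_C^{\hat y_I,\mathcal{A}}(x)=B_{2C,\mathcal{A}}^{-1}\big(b_{2,\mathcal{A}}-B_{2I,\mathcal{A}}\hat y_I-A_{2,\mathcal{A}}x\big)$$ and the critical region $$CR(\hat y_I,\mathcal{A})=\{x\in\mathbb{R}^{n_x}:\ A_2x+B_{2C}\,y_C^{\hat y_I,\mathcal{A}}(x)+B_{2I}\hat y_I\le b_2\}.$$ Consider the following iteration (Parametric Region Search), started from some $x_0\in\mathbb{R}^{n_x}$ and without an iteration cap. At iteration $k=0,1,2,\dots$: (1) compute an optimal solution $y_k=(y_{C,k},\hat y_{I,k})$ of the lower-level problem $\min_z\{d_2^\top z: A_2x_k+B_2z\le b_2\}$ at $x=x_k$ and record it; (2)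 if $x_k\in CR_i$ for some $i\in\{0,\dots,k-1\}$, stop; (3) otherwise choose an index set $\mathcal{A}_k$ with $|\mathcal{A}_k|=n_{yC}$, $B_{2C,\mathcal{A}_k}$ invertible, such that the constraints indexed by $\mathcal{A}_k$ are active at $(x_k,y_k)$ and $y_{C,k}=y_C^{\hat y_{I,k},\mathcal{A}_k}(x_k)$, and set $CR_k=CR(\hat y_{I,k},\mathcal{A}_k)$; (4) let $x_{k+1}$ be any point of $CR_k$ (in the method, a minimizer of the upper-level objective with $y$ replaced by $(y_C^{\hat y_{I,k},\mathcal{A}_k}(x),\hat y_{I,k})$ over $x\in CR_k$ subject to the upper-level constraints), and continue with $k+1$. Assume that at every iteration the lower-level problem at $x_k$ has an optimal solution, that an index set $\mathcal{A}_k$ as in (3) exists, and that the point $x_{k+1}$ in (4) exists. Then $x_k\in CR_k$ for each $k$ at which step (3) is executed, the generated critical regions correspond to pairwise distinct pairs $(\hat y_{I,k},\mathcal{A}_k)$, and consequently the iteration stops after at most $2^{n_{yI}}\binom{m_2}{n_{yC}}+1$ iterations.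
   Context: Notation: for a matrix $M$ and index set $\mathcal{A}$ of rows, $M_{\mathcal{A}}$ denotes the submatrix formed by the rows indexed by $\mathcal{A}$; similarly $b_{2,\mathcal{A}}$ is the subvector of $b_2$. A constraint $i$ of the lower level is active at $(x,z)$ if $(A_2x+B_2z)_i=(b_2)_i$. All inequalities between vectors are componentwise. The lower-level integer variables are assumed binary. *)

From HB Require Import structures.
From mathcomp Require Import all_boot all_order all_algebra.
Set Implicit Arguments. Unset Strict Implicit. Unset Printing Implicit Defensive.
Import Order.TTheory GRing.Theory Num.Theory.
Local Open Scope ring_scope.

Section PRS.
Variable R : realFieldType.

Definition mle (p q : nat) (u v : 'M[R]_(p, q)) : Prop :=
  forall i j, u i j <= v i j.

(* The row submatrix M_A, rows taken in increasing order of A, as a k x n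
   matrix (k will be |A|; if #|A| <> k it is the zero matrix, but all uses
   below require #|A| = k). *)
Definition rowsA (m n k : nat) (A : {set 'I_m}) (M : 'M[R]_(m, n)) : 'M[R]_(k, n) :=
  conform_mx (0 : 'M[R]_(k, n)) (rowsub (@enum_val _ (mem A)) M).

Variables (nx nC nI m2 : nat).
Variables (A2 : 'M[R]_(m2, nx)) (B2C : 'M[R]_(m2, nC)) (B2I : 'M[R]_(m2, nI))
          (b2 : 'cV[R]_m2) (d2C : 'cV[R]_nC) (d2I : 'cV[R]_nI).

Definition binary (p : nat) (v : 'cV[R]_p) : Prop :=
  forall i, v i 0 = 0 \/ v i 0 = 1.

Definition ll_feasible (x : 'cV[R]_nx) (zC : 'cV[R]_nC) (zI : 'cV[R]_nI) : Prop :=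
  binary zI /\ mle (A2 *m x + B2C *m zC + B2I *m zI) b2.

Definition ll_obj (zC : 'cV[R]_nC) (zI : 'cV[R]_nI) : R :=
  (d2C^T *m zC + d2I^T *m zI) 0 0.

Definition ll_optimal (x : 'cV[R]_nx) (zC : 'cV[R]_nC) (zI : 'cV[R]_nI) : Prop :=
  ll_feasible x zC zI /\
  forall zC' zI', ll_feasible x zC' zI' -> ll_obj zC zI <= ll_obj zC' zI'.

Definition yCmap (yI : 'cV[R]_nI) (A : {set 'I_m2}) (x : 'cV[R]_nx) : 'cV[R]_nC :=
  invmx (rowsA nC A B2C) *m
    (rowsA nC A b2 - rowsA nC A B2I *m yI - rowsA nC A A2 *m x).

Definition inCR (yI : 'cV[R]_nI) (A : {set 'I_m2}) (x : 'cV[R]_nx) : Prop :=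
  mle (A2 *m x + B2C *m yCmap yI A x + B2I *m yI) b2.

Definition admissible (A : {set 'I_m2}) (x : 'cV[R]_nx)
    (yC : 'cV[R]_nC) (yI : 'cV[R]_nI) : Prop :=
  [/\ #|A| = nC,
      rowsA nC A B2C \in unitmx,
      (forall i, i \in A -> (A2 *m x + B2C *m yC + B2I *m yI) i 0 = b2 i 0)
    & yC = yCmap yI A x].

End PRS.

(* At iteration k the method does not stop at step (2) (so step (3) is executed):
   x_k lies in none of CR_0, ..., CR_{k-1}. *)
Definition continues (R : realFieldType) (nx nI m2 nC : nat)
    (A2 : 'M[R]_(m2, nx)) (B2C : 'M[R]_(m2, nC)) (B2I : 'M[R]_(m2, nI))
    (b2 : 'cV[R]_m2)
    (x : nat -> 'cV[R]_nx) (yI : nat -> 'cV[R]_nI) (Aset : nat -> {set 'I_m2})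
    (k : nat) : Prop :=
  forall i, (i < k)%N -> ~ inCR A2 B2C B2I b2 (yI i) (Aset i) (x k).

(* Step (3) makes y_{C,k} = y_C^{yI_k,A_k}(x_k), so feasibility of y_k at x_k
   says precisely that x_k lies in its own region CR_k.  Since step (2) found
   x_k outside CR_0, ..., CR_{k-1}, the pair (yI_k, A_k) differs from all the
   earlier ones.  There are only 2^nI binary vectors and C(m2, nC) index sets of
   size nC, so by pigeonhole the method cannot pass step (2) more than
   2^nI C(m2, nC) times. *)

From Stdlib Require Import Classical.
From HB Require Import structures.
From mathcomp Require Import all_boot all_order all_algebra.
Set Implicit Arguments. Unset Strict Implicit. Unset Printing Implicit Defensive.
Import Order.TTheory GRing.Theory Num.Theory.
Local Open Scope ring_scope.

Lemma first_failure (P : nat -> Prop) (n : nat) :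
  (forall j, (j < n)%N -> P j) \/
  exists K, [/\ (K < n)%N, forall j, (j < K)%N -> P j & ~ P K].
Proof.
elim: n => [|n [IH|[K [ltKn PK nPK]]]]; first by left.
- have [Pn|nPn] := classic (P n); last by right; exists n.
  by left=> j; rewrite ltnS leq_eqVlt => /predU1P[->|/IH].
- by right; exists K; split=> //; apply: ltnW.
Qed.

Definition binary_pattern (R : realFieldType) (p : nat) (v : 'cV[R]_p) :
    {ffun 'I_p -> bool} :=
  [ffun i => v i 0 == 1].

Lemma binary_pattern_inj (R : realFieldType) (p : nat) (u v : 'cV[R]_p) :
  binary u -> binary v -> binary_pattern u = binary_pattern v -> u = v.
Proof.
move=> bu bv /ffunP eq_uv; apply/matrixP => i j; rewrite (ord1 j).
have := eq_uv i; rewrite !ffunE.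
by case: (bu i) => ->; case: (bv i) => -> //; rewrite eqxx eq_sym oner_eq0.
Qed.

Lemma distinct_binary_subset_pairs_le (R : realFieldType) (p m c n : nat)
    (v : nat -> 'cV[R]_p) (S : nat -> {set 'I_m}) :
  (forall k, (k < n)%N -> binary (v k) /\ #|S k| = c) ->
  (forall i j, (i < j < n)%N -> (v i, S i) <> (v j, S j)) ->
  (n <= 2 ^ p * 'C(m, c))%N.
Proof.
move=> vSk distinct_vS.
pose f (k : 'I_n) := (binary_pattern (v k), S k).
have f_inj : injective f.
  have f_lt (k1 k2 : 'I_n) : (k1 < k2)%N -> f k1 <> f k2.
    move=> lt12 [eq_v eq_S]; apply: (distinct_vS k1 k2); first by rewrite lt12 /=.
    have [bv1 _] := vSk k1 (ltn_ord k1); have [bv2 _] := vSk k2 (ltn_ord k2).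
    by rewrite (binary_pattern_inj bv1 bv2 eq_v) eq_S.
  move=> k1 k2 eq_f; apply: val_inj; case: (ltngtP k1 k2) => // lt; exfalso.
  - exact: f_lt lt eq_f.
  - exact: f_lt lt (esym eq_f).
have : (#|f @: [set: 'I_n]| <= #|setX [set: {ffun 'I_p -> bool}]
                                     [set A : {set 'I_m} | #|A| == c]|)%N.
  apply/subset_leq_card/subsetP => _ /imsetP[k _ ->].
  by rewrite !inE /= (proj2 (vSk k (ltn_ord k))) eqxx.
by rewrite card_imset // cardsX !cardsT card_ord card_ffun card_bool card_ord
           card_draws card_ord.
Qed.

Lemma inCR_of_admissible (R : realFieldType) (nx nC nI m2 : nat)
    (A2 : 'M[R]_(m2, nx)) (B2C : 'M[R]_(m2, nC)) (B2I : 'M[R]_(m2, nI))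
    (b2 : 'cV[R]_m2) (A : {set 'I_m2}) (x : 'cV[R]_nx) (yC : 'cV[R]_nC)
    (yI : 'cV[R]_nI) :
  ll_feasible A2 B2C B2I b2 x yC yI -> admissible A2 B2C B2I b2 A x yC yI ->
  inCR A2 B2C B2I b2 yI A x.
Proof. by move=> [_ feas] [_ _ _ def_yC]; rewrite /inCR -def_yC. Qed.

Section RegionSearch.

Variables (R : realFieldType) (nx nC nI m2 : nat).
Variables (A2 : 'M[R]_(m2, nx)) (B2C : 'M[R]_(m2, nC)) (B2I : 'M[R]_(m2, nI))
          (b2 : 'cV[R]_m2) (d2C : 'cV[R]_nC) (d2I : 'cV[R]_nI).
Variables (x : nat -> 'cV[R]_nx) (yC : nat -> 'cV[R]_nC)
          (yI : nat -> 'cV[R]_nI) (Aset : nat -> {set 'I_m2}).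

Local Notation continues := (continues A2 B2C B2I b2 x yI Aset).

Hypothesis ll_optimal_iterate : forall k,
  (forall j, (j < k)%N -> continues j) ->
  ll_optimal A2 B2C B2I b2 d2C d2I (x k) (yC k) (yI k).
Hypothesis admissible_iterate : forall k,
  (forall j, (j <= k)%N -> continues j) ->
  admissible A2 B2C B2I b2 (Aset k) (x k) (yC k) (yI k).

Lemma inCR_iterate k : (forall j, (j <= k)%N -> continues j) ->
  inCR A2 B2C B2I b2 (yI k) (Aset k) (x k).
Proof.
move=> cont; apply: inCR_of_admissible (admissible_iterate cont).
by case: (ll_optimal_iterate (fun j lt_jk => cont j (ltnW lt_jk))).
Qed.

Lemma iterate_pairs_distinct i j : (i < j)%N ->
  (forall l, (l <= j)%N -> continues l) -> (yI i, Aset i) <> (yI j, Aset j).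
Proof.
move=> lt_ij cont [eq_yI eq_A]; apply: (cont j (leqnn j) i lt_ij).
by rewrite eq_yI eq_A; apply: inCR_iterate.
Qed.

Lemma continues_bound n : (forall j, (j < n)%N -> continues j) ->
  (n <= 2 ^ nI * 'C(m2, nC))%N.
Proof.
move=> cont; apply: (distinct_binary_subset_pairs_le (v := yI) (S := Aset)).
  move=> k lt_kn.
  have cont_k l (le_lk : (l <= k)%N) := cont l (leq_ltn_trans le_lk lt_kn).
  have [[bin _] _] := ll_optimal_iterate (fun l lt_lk => cont_k l (ltnW lt_lk)).
  have [cardA _ _ _] := admissible_iterate cont_k.
  by split.
move=> i j /andP[lt_ij lt_jn]; apply: iterate_pairs_distinct lt_ij _.
by move=> l le_lj; apply: cont; apply: leq_ltn_trans lt_jn.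
Qed.

End RegionSearch.

Theorem mainTheorem1 (R : realFieldType) (nx nC nI m2 : nat)
  (A2 : 'M[R]_(m2, nx)) (B2C : 'M[R]_(m2, nC)) (B2I : 'M[R]_(m2, nI))
  (b2 : 'cV[R]_m2) (d2C : 'cV[R]_nC) (d2I : 'cV[R]_nI)
  (x : nat -> 'cV[R]_nx) (yC : nat -> 'cV[R]_nC) (yI : nat -> 'cV[R]_nI)
  (Aset : nat -> {set 'I_m2}) :
  (* step (1): y_k is an optimal lower-level solution at x_k, whenever
     iteration k is reached *)
  (forall k, (forall j, (j < k)%N -> continues A2 B2C B2I b2 x yI Aset j) ->
     ll_optimal A2 B2C B2I b2 d2C d2I (x k) (yC k) (yI k)) ->
  (* step (3): A_k is admissible whenever step (3) is executed at k *)
  (forall k, (forall j, (j <= k)%N -> continues A2 B2C B2I b2 x yI Aset j) ->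
     admissible A2 B2C B2I b2 (Aset k) (x k) (yC k) (yI k)) ->
  (* step (4): x_{k+1} \in CR_k whenever step (3) is executed at k *)
  (forall k, (forall j, (j <= k)%N -> continues A2 B2C B2I b2 x yI Aset j) ->
     inCR A2 B2C B2I b2 (yI k) (Aset k) (x k.+1)) ->
  [/\ (* x_k \in CR_k whenever step (3) is executed at k *)
      (forall k, (forall j, (j <= k)%N -> continues A2 B2C B2I b2 x yI Aset j) ->
         inCR A2 B2C B2I b2 (yI k) (Aset k) (x k)),
      (* the pairs (yI_k, A_k) of generated regions are pairwise distinct *)
      (forall i j, (i < j)%N ->
         (forall l, (l <= j)%N -> continues A2 B2C B2I b2 x yI Aset l) ->
         (yI i, Aset i) <> (yI j, Aset j))
    & (* the method stops at step (2) of some iteration K, i.e. after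
         K+1 <= 2^nI * C(m2, nC) + 1 iterations *)
      exists K : nat, (K.+1 <= 2 ^ nI * 'C(m2, nC) + 1)%N /\
        (forall j, (j < K)%N -> continues A2 B2C B2I b2 x yI Aset j) /\
        ~ continues A2 B2C B2I b2 x yI Aset K].
Proof.
(* Termination does not depend on how x_{k+1} is chosen in CR_k. *)
move=> ll_opt adm _.
split; first exact: inCR_iterate ll_opt adm.
  exact: iterate_pairs_distinct ll_opt adm.
have [cont|[K [lt_K cont nK]]] :=
  first_failure (continues A2 B2C B2I b2 x yI Aset) (2 ^ nI * 'C(m2, nC)).+1.
  by have := continues_bound ll_opt adm cont; rewrite ltnn.
by exists K; rewrite addn1.
Qed.
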